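(* Every (unbounded-fanin) formula computing $\textsc{parity}_n(x)=x_1\oplus\cdots\oplus x_n$ has $\Omega(n^2)$ gates, and likewise every formula computing $\textsc{majority}_n$ (which is 1 iff more than half of the $n$ input bits are 1) has $\Omega(n^2)$ gates.
   Context: A formula on input variables $x_1,\dots,x_n$ is a rooted tree whose leaves are labeled by input variables (the same variable may label many leaves) and whose internal vertices are \textsc{not} gates (fanin 1) or unbounded-fanin \textsc{and}/\textsc{or} gates; its number of gates is the number of \textsc{and} and \textsc{or} gates. *)

From mathcomp Require Import all_boot.
Set Implicit Arguments. Unset Strict Implicit. Unset Printing Implicit Defensive.

Inductive formula (n : nat) : Type :=
| FVar of 'I_n
| FNot of formula n
| FAnd of seq (formula n)
| FOr of seq (formula n).

Arguments FVar {n}.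
Arguments FNot {n}.
Arguments FAnd {n}.
Arguments FOr {n}.

Fixpoint eval_formula n (x : 'I_n -> bool) (F : formula n) : bool :=
  match F with
  | FVar i => x i
  | FNot G => ~~ eval_formula x G
  | FAnd l => all id (map (eval_formula x) l)
  | FOr l => has id (map (eval_formula x) l)
  end.

Fixpoint gates n (F : formula n) : nat :=
  match F with
  | FVar _ => 0
  | FNot G => gates G
  | FAnd l => (sumn (map (@gates n) l)).+1
  | FOr l => (sumn (map (@gates n) l)).+1
  end.

Definition computes n (F : formula n) (f : ('I_n -> bool) -> bool) : Prop :=
  forall x, eval_formula x F = f x.

Definition ones n (x : 'I_n -> bool) : nat := #|[pred i | x i]|.

Definition parity n (x : 'I_n -> bool) : bool := odd (ones x).

Definition majority n (x : 'I_n -> bool) : bool := n < 2 * ones x.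

From mathcomp Require Import all_boot zify.
Set Implicit Arguments. Unset Strict Implicit. Unset Printing Implicit Defensive.

(* Quadratic lower bounds for PARITY and MAJORITY against unbounded-fanin
   formulas, by Khrapchenko's method combined with random restrictions.

   Pair the variables as {2p, 2p+1} for p < k = n/2.  A restriction leaves
   each pair free or fixes it to (b, ~~ b) (an unpaired last variable is fixed
   to 0), so that every fixed pair contributes exactly one 1.  For a formula F
   and a restriction s we define a restricted Khrapchenko measure [cost s F]:
   each gate is charged the number of free variables among its literal
   children, or nothing when a literal child already fixes its value.
   1. (Khrapchenko) For every s, every set A of ones and B of zeros of F that
      are consistent with s satisfy  edges(A, B)^2 <= cost s F * |A| * |B|.
   2. (Averaging) Summed over the 3^k restrictions, cost s F is at most
      3^k (2 gates F + 1): a gate whose literal children touch q pairs costs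
      at most 2q, and only in the at most 2^q 3^(k-q) restrictions that fix
      none of these pairs so as to determine the gate.
   3. (Lower bound) PARITY and MAJORITY separate the consistent inputs with
      f + 1 and with f free ones, f the number of free pairs; these two sets
      have minimum degree f into each other, so f^2 <= cost s F by 1.
   4. As f averages k/3, the average of f^2 is at least k^2/9, whence
      k^2 <= 9 (2 gates F + 1), and n^2 <= 162 gates F for n >= 8. *)

Lemma four_mul_le_sqr_add x y : 4 * (x * y) <= (x + y) ^ 2.
Proof.
rewrite !expnS expn0 muln1.
wlog le_xy : x y / x <= y => [hwlog|].
  case: (leqP x y) => [|/ltnW]; first exact: hwlog.
  by rewrite [x * y]mulnC [x + y]addnC; apply: hwlog.
have -> : y = x + (y - x) by lia.
nia.
Qed.

Lemma double_le_add_of_sqr_le_mul p x y : p * p <= x * y -> 2 * p <= x + y.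
Proof.
move=> le_p; have := four_mul_le_sqr_add x y; rewrite !expnS expn0 muln1 => amgm.
rewrite leqNgt; apply/negP => lt_sum; have := ltn_mul lt_sum lt_sum; nia.
Qed.

(* Bounds e_i^2 <= L_i a_i b on two parts add up: this is how the
   Khrapchenko measure of a set split into two parts is controlled. *)
Lemma sqr_add_le_split e1 e2 L1 L2 a1 a2 b :
  e1 ^ 2 <= L1 * a1 * b -> e2 ^ 2 <= L2 * a2 * b ->
  (e1 + e2) ^ 2 <= (L1 + L2) * (a1 + a2) * b.
Proof.
rewrite !expnS !expn0 !muln1 => h1 h2.
have cross : (e1 * e2) * (e1 * e2) <= (L1 * a2 * b) * (L2 * a1 * b).
  by have := leq_mul h1 h2; nia.
have := double_le_add_of_sqr_le_mul cross; nia.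
Qed.

Lemma mul_exp2_le_exp3 q : q * 2 ^ q <= 3 ^ q.
Proof.
elim: q => [//|q IH]; case: q IH => [//|[//|q]] IH.
rewrite (expnS 2) (expnS 3).
have le_q : q.+3 * 2 <= 3 * q.+2 by lia.
have := leq_mul le_q (leqnn (2 ^ q.+2)).
move: IH; generalize (2 ^ q.+2) (3 ^ q.+2) => a c; nia.
Qed.

Section Formulas.
Variable n : nat.
Implicit Types (F c : formula n) (l : seq (formula n)).

(* Membership of a subformula in a list of children (formulas carry no
   decidable equality, so this is a Prop-valued membership). *)
Fixpoint child c l : Prop :=
  if l is c' :: l' then c' = c \/ child c l' else False.

Fixpoint formula_nested_ind (P : formula n -> Prop)
  (hV : forall i, P (FVar i)) (hN : forall G, P G -> P (FNot G))
  (hA : forall l, (forall c, child c l -> P c) -> P (FAnd l))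
  (hO : forall l, (forall c, child c l -> P c) -> P (FOr l)) F : P F :=
  let fix children l : forall c, child c l -> P c :=
    match l with
    | nil => fun c H => False_ind _ H
    | c' :: l' => fun c H => match H with
       | or_introl e => eq_ind c' P (formula_nested_ind hV hN hA hO c') c e
       | or_intror H' => children l' c H' end
    end in
  match F with
  | FVar i => hV i
  | FNot G => hN G (formula_nested_ind hV hN hA hO G)
  | FAnd l => hA l (children l)
  | FOr l => hO l (children l)
  end.

Lemma hasP_child (p : pred (formula n)) l :
  reflect (exists c, child c l /\ p c) (has p l).
Proof.
elim: l => [|c l IH] /=; first by constructor => -[c []].
case pc: (p c); first by constructor; exists c; split => //; left.
apply: (iffP IH) => [[c' [h1 h2]]|[c' [[<-|h1] h2]]].
- by exists c'; split => //; right.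
- by rewrite h2 in pc.
- by exists c'.
Qed.

Lemma allP_child (p : pred (formula n)) l : all p l -> forall c, child c l -> p c.
Proof. by elim: l => //= c l IH /andP[pc al] c' [<-|h] //; apply: IH. Qed.

Lemma sumn_le_child (f g : formula n -> nat) l :
  (forall c, child c l -> f c <= g c) -> sumn (map f l) <= sumn (map g l).
Proof.
elim: l => [|c l IH] //= h.
by rewrite leq_add ?h ?IH // => [|c' h']; [left | apply: h; right].
Qed.

(* A literal is a variable under a (possibly empty) chain of negations;
   [literal F = Some (v, t)] means that F computes x_v (+) t. *)
Fixpoint literal F : option ('I_n * bool) :=
  match F with
  | FVar i => Some (i, false)
  | FNot G => omap (fun p => (p.1, ~~ p.2)) (literal G)
  | _ => None
  end.

Lemma literal_eval x F v t : literal F = Some (v, t) -> eval_formula x F = x v (+) t.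
Proof.
elim: F v t => [i|G IH| l | l] v t //=; first by case=> -> <-; rewrite addbF.
case E: (literal G) => [[w u]|] //= [<- <-].
by rewrite (IH _ _ E) addbN.
Qed.

Lemma literal_gates F p : literal F = Some p -> gates F = 0.
Proof.
elim: F p => [i|G IH| l | l] p //=.
by case E: (literal G) => [q|] //= _; apply: (IH q).
Qed.

End Formulas.

Section Cube.
Variable n : nat.
Local Notation X := {ffun 'I_n -> bool}.
Implicit Types (x y : X) (A B : {set X}).

Definition flip x (i : 'I_n) : X := [ffun j => if j == i then ~~ x j else x j].
Definition adjacent x y := [exists i, y == flip x i].
Definition nbrs B x := #|[set y in B | adjacent x y]|.
Definition edges A B := \sum_(x in A) nbrs B x.

Lemma flipE x i j : flip x i j = if j == i then ~~ x j else x j.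
Proof. by rewrite ffunE. Qed.

Lemma flipK x i : flip (flip x i) i = x.
Proof. by apply/ffunP=> j; rewrite !flipE; case: eqP => // ->; rewrite negbK. Qed.

Lemma flip_inj x : injective (flip x).
Proof. by move=> v w /ffunP /(_ v); rewrite !flipE eqxx; case: eqP => // _; case: (x v). Qed.

Lemma adjacent_sym x y : adjacent x y = adjacent y x.
Proof. by apply/existsP/existsP => -[i /eqP ->]; exists i; rewrite flipK. Qed.

Lemma nbrsE B x : nbrs B x = \sum_(y in B) adjacent x y.
Proof.
rewrite /nbrs -sum1_card big_mkcond /= [RHS]big_mkcond /=.
by apply: eq_bigr => y _; rewrite inE; case: (y \in B); case: adjacent.
Qed.

Lemma edges_sumr A B : edges A B = \sum_(y in B) nbrs A y.
Proof.
rewrite /edges (eq_bigr _ (fun x _ => nbrsE B x)) exchange_big /=.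
by apply: eq_bigr => y _; rewrite nbrsE; apply: eq_bigr => x _; rewrite adjacent_sym.
Qed.

Lemma edgesC A B : edges A B = edges B A.
Proof. by rewrite edges_sumr. Qed.

Lemma edges_splitl A B P : edges A B = edges (A :&: P) B + edges (A :\: P) B.
Proof. by rewrite /edges (big_setID P). Qed.

Lemma edges0l A B : (forall x, x \in A -> False) -> edges A B = 0.
Proof. by move=> h; rewrite /edges big1 // => x /h. Qed.

Lemma edges0r A B : (forall y, y \in B -> False) -> edges A B = 0.
Proof. by move=> h; rewrite edges_sumr big1 // => y /h. Qed.

Lemma card_le_nbrs B x (V : {set 'I_n}) :
  (forall v, v \in V -> flip x v \in B) -> #|V| <= nbrs B x.
Proof.
move=> hV; rewrite -(card_imset V (@flip_inj x)); apply: subset_leq_card.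
apply/subsetP => y /imsetP [v vV ->].
by rewrite inE hV //=; apply/existsP; exists v.
Qed.

Lemma edges_min_degree A B da db :
  (forall x, x \in A -> da <= nbrs B x) -> (forall y, y \in B -> db <= nbrs A y) ->
  da * db * (#|A| * #|B|) <= edges A B ^ 2.
Proof.
move=> hA hB.
have eA : #|A| * da <= edges A B by rewrite -sum_nat_const; apply: leq_sum.
have eB : #|B| * db <= edges A B by rewrite edges_sumr -sum_nat_const; apply: leq_sum.
have := leq_mul eA eB; rewrite expnS expn1; apply: leq_trans.
by rewrite mulnACA (mulnC da) (mulnC db) mulnACA.
Qed.

Definition count_ones (P : pred 'I_n) x := #|[set w | P w && x w]|.

Lemma count_onesE (P : pred 'I_n) x : count_ones P x = \sum_w (P w && x w).
Proof.
rewrite /count_ones -sum1_card [LHS]big_mkcond /=; apply: eq_bigr => w _.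
by rewrite inE; case: (P w && x w).
Qed.

Lemma count_ones_flip (P : pred 'I_n) x v :
  P v -> count_ones P (flip x v) + x v = count_ones P x + ~~ x v.
Proof.
move=> Pv; rewrite !count_onesE (bigD1 v) //= [in RHS](bigD1 v) //= flipE eqxx Pv /=.
have -> : \sum_(i < n | i != v) (P i && flip x v i) = \sum_(i < n | i != v) (P i && x i).
  by apply: eq_bigr => w /negbTE wv; rewrite flipE wv.
by case: (x v) => /=; rewrite ?add0n ?addn0 // addnC.
Qed.

Lemma ones_count x : ones x = count_ones predT x.
Proof. by apply: eq_card => w; rewrite !inE. Qed.

End Cube.

Section Restrictions.
Variable n : nat.
Local Notation k := (n./2).
Local Notation X := {ffun 'I_n -> bool}.
Implicit Types (x y : X) (A B : {set X}) (v : 'I_n) (F c : formula n) (l : seq (formula n)).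

(* A restriction leaves each pair of variables {2p, 2p+1} (p < n/2) free
   (value None) or fixes it to (b, ~~ b) (value Some b); when n is odd the
   last variable is fixed to 0.  Every fixed pair thus contains exactly one 1. *)
Definition restriction := {ffun 'I_k -> option bool}.
Implicit Types s : restriction.

Definition forced s v : option bool :=
  if (insub (v./2) : option 'I_k) is Some p then omap (fun b => b (+) odd v) (s p)
  else Some false.
Definition free s v := forced s v == None.
Definition consistent s x :=
  [forall v, if forced s v is Some t then x v == t else true].

Lemma consistentP s x v t : consistent s x -> forced s v = Some t -> x v = t.
Proof. by move=> /forallP /(_ v); case: forced => // t' /eqP -> [->]. Qed.

Lemma consistent_flip s x v : free s v -> consistent s x -> consistent s (flip x v).
Proof.
move=> fv cx; apply/forallP => w; case E: forced => [t|] //.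
rewrite flipE; case: (eqVneq w v) => [wv|_]; first by move: fv; rewrite -wv /free E.
by rewrite (consistentP cx E).
Qed.

Lemma free_of_consistent_flip s x v :
  consistent s x -> consistent s (flip x v) -> free s v.
Proof.
move=> cx cy; rewrite /free; case E: forced => [u|] //.
by have := consistentP cy E; rewrite flipE eqxx (consistentP cx E); case: (u).
Qed.

Lemma card_restriction : #|{: restriction}| = 3 ^ k.
Proof. by rewrite card_ffun card_option card_bool card_ord. Qed.

Lemma pair_var_lt (p : 'I_k) (e : bool) : e + p.*2 < n.
Proof. by have := ltn_ord p; have := odd_double_half n; case: e => /=; lia. Qed.
Definition pair_var (pe : 'I_k * bool) : 'I_n := Ordinal (pair_var_lt pe.1 pe.2).

Lemma pair_var_inj : injective pair_var.
Proof.
move=> [p e] [q f] /(congr1 val) /= h.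
have hp : p = q :> nat by rewrite -(half_bit_double p e) h half_bit_double.
have -> : e = f by move: (congr1 odd h); rewrite !oddD !odd_double !addbF; case: (e); case: (f).
by rewrite (val_inj hp).
Qed.

Lemma pair_var_half pe : (val (pair_var pe))./2 = val pe.1.
Proof. by case: pe => p e /=; rewrite half_bit_double. Qed.

Lemma pair_var_odd pe : odd (val (pair_var pe)) = pe.2.
Proof. by case: pe => p e /=; rewrite oddD odd_double addbF; case: (e). Qed.

Lemma pair_varE v (h : v./2 < k) : v = pair_var (Ordinal h, odd v).
Proof. by apply: val_inj => /=; rewrite odd_double_half. Qed.

Lemma forced_paired s v (h : v./2 < k) :
  forced s v = omap (fun b => b (+) odd v) (s (Ordinal h)).
Proof. by rewrite /forced insubT. Qed.

Lemma forced_unpaired s v : ~~ (v./2 < k) -> forced s v = Some false.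
Proof. by move=> h; rewrite /forced insubN. Qed.

Lemma free_paired s v : free s v -> v./2 < k.
Proof. by rewrite /free /forced; case: insubP. Qed.

Lemma forced_pair_var s pe : forced s (pair_var pe) = omap (fun b => b (+) pe.2) (s pe.1).
Proof.
have h : (val (pair_var pe))./2 < k by rewrite pair_var_half ltn_ord.
rewrite (forced_paired s h) pair_var_odd.
by have -> : Ordinal h = pe.1 by apply: val_inj; rewrite /= pair_var_half.
Qed.

(* Under s, the literal child c of a gate of polarity b (b = false for OR,
   b = true for AND) is forced to the value that determines the gate. *)
Definition kills s (b : bool) c :=
  if literal c is Some (v, t) then
    (if forced s v is Some u then b (+) (u (+) t) else false)
  else false.
Definition literal_var c v := omap fst (literal c) == Some v.
Definition free_literal_vars s l := [set v | free s v & has (literal_var^~ v) l].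

Definition gate_cost s b l :=
  if has (kills s b) l then 0 else #|free_literal_vars s l|.

Definition nonliteral_cost (cost : formula n -> nat) l :=
  sumn [seq (if literal c == None then cost c else 0) | c <- l].

(* A restricted Khrapchenko measure: the sum of the gate costs, where a
   literal contributes only through its parent gate (or by itself, when
   the whole formula is a literal). *)
Fixpoint cost s F : nat :=
  match F with
  | FVar i => free s i
  | FNot G => cost s G
  | FAnd l => gate_cost s true l + nonliteral_cost (cost s) l
  | FOr l => gate_cost s false l + nonliteral_cost (cost s) l
  end.

Definition cost_bounds s F := forall A B,
  (forall x, x \in A -> consistent s x && eval_formula x F) ->
  (forall y, y \in B -> consistent s y && ~~ eval_formula y F) ->
  edges A B ^ 2 <= cost s F * #|A| * #|B|.

Lemma edges_bound_swap A B m :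
  edges B A ^ 2 <= m * #|B| * #|A| -> edges A B ^ 2 <= m * #|A| * #|B|.
Proof. by rewrite edgesC mulnAC. Qed.

Lemma cost_bounds_xor s F b : cost_bounds s F -> forall A B,
  (forall x, x \in A -> consistent s x && (b (+) eval_formula x F)) ->
  (forall y, y \in B -> consistent s y && ~~ (b (+) eval_formula y F)) ->
  edges A B ^ 2 <= cost s F * #|A| * #|B|.
Proof.
move=> hF A B hA hB; case: b hA hB => hA hB; last exact: hF.
apply: edges_bound_swap; apply: hF => [x /hB|y /hA];
  by case: consistent => //=; case: eval_formula.
Qed.

(* Inputs on which some non-literal child witnesses the gate value: split A
   according to the first such child and combine the children's bounds. *)
Lemma bound_nonliteral_children s b l :
  (forall c, child c l -> literal c = None -> cost_bounds s c) -> forall A B,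
  (forall x, x \in A -> consistent s x &&
     has (fun c => (literal c == None) && (b (+) eval_formula x c)) l) ->
  (forall y, y \in B -> consistent s y && all (fun c => ~~ (b (+) eval_formula y c)) l) ->
  edges A B ^ 2 <= nonliteral_cost (cost s) l * #|A| * #|B|.
Proof.
rewrite /nonliteral_cost; elim: l => [|c l IH] hK A B hA hB /=.
  by rewrite edges0l // => x /hA; rewrite andbF.
have hK_tail c' : child c' l -> literal c' = None -> cost_bounds s c'.
  by move=> h'; apply: hK; right.
have hB_tail y : y \in B -> consistent s y && all (fun c => ~~ (b (+) eval_formula y c)) l.
  by move/hB=> /andP[-> /andP[]].
case Hc: (literal c == None); last first.
  by rewrite add0n; apply: IH => // x /hA; rewrite /= Hc.
set P := [set x : X | b (+) eval_formula x c].
rewrite (edges_splitl A B P) -(cardsID P A); apply: sqr_add_le_split.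
- apply: (cost_bounds_xor (b := b) (hK c (or_introl erefl) (eqP Hc))) => [x|y].
    by rewrite inE => /andP[/hA /andP[-> _]]; rewrite inE.
  by move/hB=> /andP[-> /andP[]].
- apply: IH => // x; rewrite inE => /andP[xP /hA /andP[-> /=]].
  by rewrite inE in xP; rewrite Hc (negbTE xP).
Qed.

(* Inputs on which a literal child witnesses the gate value have at most one
   neighbour outside the gate's witness set: the flip of that literal. *)
Lemma edges_literal_le_cardl b l A B :
  (forall x, x \in A ->
     has (fun c => (literal c != None) && (b (+) eval_formula x c)) l) ->
  (forall y, y \in B -> all (fun c => ~~ (b (+) eval_formula y c)) l) ->
  edges A B <= #|A|.
Proof.
move=> hA hB; rewrite /edges -sum1_card; apply: leq_sum => x xA.
have /hasP_child[c [cl /andP[lc tc]]] := hA x xA.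
case E: (literal c) lc => [[v t]|] // _; rewrite (literal_eval _ E) in tc.
apply: leq_trans (subset_leq_card (_ : _ \subset [set flip x v])) _; last by rewrite cards1.
apply/subsetP => y; rewrite !inE => /andP[yB /existsP[i /eqP yE]].
have := allP_child (hB y yB) cl; rewrite (literal_eval _ E) yE flipE.
by case: (eqVneq v i) => [->|_]; rewrite ?eqxx ?tc.
Qed.

(* Dually, a consistent input on which no child witnesses the gate value
   reaches such inputs only by flipping a free literal variable. *)
Lemma edges_literal_le_cardr s b l A B :
  (forall x, x \in A -> consistent s x &&
     has (fun c => (literal c != None) && (b (+) eval_formula x c)) l) ->
  (forall y, y \in B -> consistent s y && all (fun c => ~~ (b (+) eval_formula y c)) l) ->
  edges A B <= #|free_literal_vars s l| * #|B|.
Proof.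
move=> hA hB; rewrite edges_sumr mulnC -sum_nat_const; apply: leq_sum => y yB.
have /andP[cy /allP_child ay] := hB y yB.
apply: leq_trans (subset_leq_card (_ : _ \subset flip y @: free_literal_vars s l))
  (leq_imset_card _ _).
apply/subsetP => x; rewrite !inE => /andP[xA /existsP[i /eqP xE]].
apply/imsetP; exists i => //; rewrite xE in xA.
have /andP[cx /hasP_child[c [cl /andP[lc tc]]]] := hA _ xA.
case E: (literal c) lc => [[v t]|] // _.
have fc := ay c cl; rewrite (literal_eval _ E) in tc.
have vi : v = i.
  apply/eqP; apply: contraTT fc => ne.
  by rewrite negbK (literal_eval _ E); move: tc; rewrite flipE (negbTE ne).
subst v; rewrite inE (free_of_consistent_flip cy cx) /=.
by apply/hasP_child; exists c; split => //; rewrite /literal_var E.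
Qed.

Lemma bound_literal_children s b l A B :
  (forall x, x \in A -> consistent s x &&
     has (fun c => (literal c != None) && (b (+) eval_formula x c)) l) ->
  (forall y, y \in B -> consistent s y && all (fun c => ~~ (b (+) eval_formula y c)) l) ->
  edges A B ^ 2 <= #|free_literal_vars s l| * #|A| * #|B|.
Proof.
move=> hA hB.
have eA : edges A B <= #|A|.
  by apply: (edges_literal_le_cardl (b := b) (l := l)) => [x /hA|y /hB] /andP[].
have := leq_mul eA (edges_literal_le_cardr hA hB).
by rewrite expnS expn1 mulnCA mulnA.
Qed.

(* Khrapchenko's inequality for one gate of polarity b: split the witnesses
   of the gate value according to whether a literal child witnesses it. *)
Lemma bound_gate s b l :
  (forall c, child c l -> literal c = None -> cost_bounds s c) -> forall A B,
  (forall x, x \in A -> consistent s x && has (fun c => b (+) eval_formula x c) l) ->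
  (forall y, y \in B -> consistent s y && ~~ has (fun c => b (+) eval_formula y c) l) ->
  edges A B ^ 2 <= (gate_cost s b l + nonliteral_cost (cost s) l) * #|A| * #|B|.
Proof.
move=> hK A B hA hB; rewrite /gate_cost; case: ifP => [killed|alive].
  rewrite edges0r ?exp0n // => y /hB /andP[cy /negP]; apply.
  case/hasP_child: killed => c [cl]; rewrite /kills.
  case E: (literal c) => [[v t]|] //; case Ef: forced => [u|] // ku.
  by apply/hasP_child; exists c; split => //; rewrite (literal_eval _ E) (consistentP cy Ef).
have hB' y : y \in B -> consistent s y && all (fun c => ~~ (b (+) eval_formula y c)) l.
  by move/hB=> /andP[-> h]; rewrite all_predC.
set P := [set x : X | has (fun c => (literal c != None) && (b (+) eval_formula x c)) l].
rewrite (edges_splitl A B P) -(cardsID P A); apply: sqr_add_le_split.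
  apply: (bound_literal_children (b := b) (A := A :&: P)) => // x.
  by rewrite !inE => /andP[/hA /andP[-> _]].
apply: (bound_nonliteral_children (b := b) (A := A :\: P) hK) => // x.
rewrite !inE => /andP[xP /hA /andP[-> h]] /=.
case/hasP_child: h => c [cl bc]; apply/hasP_child; exists c; split => //.
rewrite bc andbT; apply: contraNT xP => lc.
by apply/hasP_child; exists c; rewrite lc bc.
Qed.

Lemma card_free_literal_vars_var s i : #|free_literal_vars s [:: FVar i]| <= free s i.
Proof.
have lit_i v : v \in free_literal_vars s [:: FVar i] -> free s v && (v == i).
  by rewrite !inE /literal_var /= orbF => /andP[-> /eqP -[<-]]; rewrite eqxx.
case fi: (free s i).
  apply: leq_trans (subset_leq_card (_ : _ \subset [set i])) _; last by rewrite cards1.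
  by apply/subsetP => v /lit_i /andP[_ vi]; rewrite inE.
rewrite leqn0 cards_eq0; apply/eqP/setP => v; rewrite in_set0.
by apply/negP => /lit_i /andP[fv /eqP vi]; rewrite -vi fv in fi.
Qed.

Lemma cost_bounds_all s F : cost_bounds s F.
Proof.
elim/formula_nested_ind: F => [i|G IH|l IH|l IH] A B hA hB.
- (* a variable behaves as an OR gate whose only child is the literal FVar i *)
  apply: leq_trans (bound_literal_children (s := s) (b := false) (l := [:: FVar i]) _ _) _.
  + by move=> x /hA /=; rewrite orbF.
  + by move=> y /hB /=; rewrite andbT.
  + by rewrite -!mulnA leq_mul2r card_free_literal_vars_var orbT.
- by apply: (cost_bounds_xor (b := true) IH) => [x /hA|y /hB] /=; case: eval_formula.
- apply: edges_bound_swap => /=.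
  apply: (bound_gate (b := true) (fun c h _ => IH c h)) => [x /hB|y /hA] /=;
    rewrite all_map; case: consistent => //=.
    by rewrite -has_predC; apply: sub_has => c.
  by rewrite -all_predC; apply: sub_all => c /=; rewrite negbK.
- apply: (bound_gate (b := false) (fun c h _ => IH c h)) => [x /hA|y /hB] /=;
  by rewrite has_map.
Qed.

End Restrictions.
Arguments cost_bounds_all {n} s F.

Section Averaging.
Variable n : nat.
Local Notation k := (n./2).
Local Notation restriction := (restriction n).
Local Notation pair_var := (@pair_var n).
Implicit Types (s : restriction) (v : 'I_n) (c : formula n) (l : seq (formula n)).

Definition kills_at (b : bool) c (p : 'I_k) (e : bool) :=
  if literal c is Some (v, t) then (v./2 == p) && (b (+) ((e (+) odd v) (+) t)) else false.
Definition killing_pairs b l := [set p : 'I_k | [exists e, has (fun c => kills_at b c p e) l]].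
Definition harmless b l (p : 'I_k) : pred (option bool) :=
  fun o => if o is Some e then ~~ has (fun c => kills_at b c p e) l else true.

Lemma harmless_of_not_killed s b l : ~~ has (kills s b) l -> s \in family (harmless b l).
Proof.
move=> alive; apply/familyP => p; rewrite /harmless unfold_in.
case Es: (s p) => [e|] //; apply/negP => /hasP_child [c [cl]].
rewrite /kills_at; case E: (literal c) => [[v t]|] // /andP[/eqP vp kc].
move/negP: alive; apply; apply/hasP_child; exists c; split => //.
have h : v./2 < k by rewrite vp.
rewrite /kills E (forced_paired s h) /=.
have -> : Ordinal h = p by apply: val_inj.
by rewrite Es.
Qed.

(* Each free literal variable lies in a killing pair: either value of its
   pair would make the literal kill the gate. *)
Lemma card_free_literal_vars_le s b l :
  #|free_literal_vars s l| <= 2 * #|killing_pairs b l|.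
Proof.
rewrite mulnC -[2]card_bool -cardsT -cardsX.
apply: leq_trans (subset_leq_card (_ : _ \subset pair_var @: setX (killing_pairs b l) setT))
  (leq_imset_card _ _).
apply/subsetP => v; rewrite inE => /andP[fv /hasP_child[c [cl lv]]].
have h := free_paired fv.
apply/imsetP; exists (Ordinal h, odd v); last exact: pair_varE.
rewrite !inE andbT; apply/existsP.
move: lv; rewrite /literal_var; case E: (literal c) => [[w t]|] //= /eqP [wv]; subst w.
exists (~~ (b (+) (odd v (+) t))); apply/hasP_child; exists c; split => //.
by rewrite /kills_at E eqxx /=; case: (b); case: (odd v); case: (t).
Qed.

Lemma gate_cost_le s b l :
  gate_cost s b l <= (if s \in family (harmless b l) then 2 * #|killing_pairs b l| else 0).
Proof.
rewrite /gate_cost; case: ifP => // alive.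
by rewrite harmless_of_not_killed ?alive // card_free_literal_vars_le.
Qed.

Lemma card_family_prod (P : 'I_k -> pred (option bool)) :
  #|(family P : simpl_pred restriction)| = \prod_(p : 'I_k) #|P p|.
Proof.
rewrite card_family /image_mem -[in RHS]big_enum /=.
by elim: (enum _) => [|p r IH] /=; rewrite ?big_nil // big_cons IH.
Qed.

(* A killing pair leaves at most 2 of its 3 values harmless. *)
Lemma card_harmless_family b l :
  #|family (harmless b l)| <= 2 ^ #|killing_pairs b l| * 3 ^ #|~: killing_pairs b l|.
Proof.
rewrite card_family_prod.
apply: leq_trans (leq_prod (E2 := fun p => if p \in killing_pairs b l then 2 else 3) _) _.
  move=> p _; case: ifP => [|_]; last by rewrite (leq_trans (max_card _)) // card_option card_bool.
  rewrite inE => /existsP[e he].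
  have : #|harmless b l p| + #|[predC harmless b l p]| = 3.
    by rewrite cardC card_option card_bool.
  have : 0 < #|[predC harmless b l p]|.
    by apply/card_gt0P; exists (Some e); rewrite !inE /= unfold_in /= he.
  lia.
rewrite (bigID (mem (killing_pairs b l))) /=.
rewrite (eq_bigr (fun _ => 2)) => [|p ->] //.
rewrite [X in _ * X <= _](eq_bigr (fun _ => 3)) => [|p /negbTE ->] //.
rewrite prod_nat_const (eq_bigl (mem (~: killing_pairs b l))) => [|p]; last by rewrite !inE.
by rewrite prod_nat_const.
Qed.

Lemma sum_gate_cost b l : \sum_(s : restriction) gate_cost s b l <= 2 * 3 ^ k.
Proof.
apply: (@leq_trans (\sum_(s : restriction)
    (if s \in family (harmless b l) then 2 * #|killing_pairs b l| else 0))).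
  by apply: leq_sum => s _; apply: gate_cost_le.
rewrite -big_mkcond /= sum_nat_const.
set q := #|killing_pairs b l|; set r := #|~: killing_pairs b l|.
have hfam : #|family (harmless b l)| <= 2 ^ q * 3 ^ r := card_harmless_family b l.
have hk : 3 ^ k = 3 ^ q * 3 ^ r by rewrite -expnD cardsC card_ord.
rewrite hk; apply: leq_trans (leq_mul hfam (leqnn (2 * q))) _.
have := leq_mul (mul_exp2_le_exp3 q) (leqnn (3 ^ r)).
generalize (2 ^ q) (3 ^ q) (3 ^ r) => a c d; nia.
Qed.

Lemma big_sumn (T : Type) (G : restriction -> T -> nat) (r : seq T) :
  \sum_s sumn [seq G s t | t <- r] = sumn [seq \sum_s G s t | t <- r].
Proof. by elim: r => [|t r IH] /=; [rewrite big1 | rewrite big_split IH]. Qed.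

Lemma sumn_mull (T : Type) a (g : T -> nat) (r : seq T) :
  sumn [seq a * g t | t <- r] = a * sumn (map g r).
Proof. by elim: r => [|t r IH] /=; rewrite ?muln0 // IH mulnDr. Qed.

Lemma sum_cost_gate b l :
  (forall c, child c l ->
     \sum_s cost s c <= 3 ^ k * (2 * gates c + (literal c != None))) ->
  \sum_s (gate_cost s b l + nonliteral_cost (cost s) l)
    <= 3 ^ k * (2 * (sumn (map (@gates n) l)).+1).
Proof.
move=> IH; rewrite big_split /= big_sumn.
apply: leq_trans (leq_add (sum_gate_cost b l)
  (sumn_le_child (g := fun c => 3 ^ k * (2 * gates c)) _)) _.
  move=> c cl; case: eqP => Hc; last by rewrite big1.
  by apply: leq_trans (IH c cl) _; rewrite Hc eqxx addn0.
by rewrite !sumn_mull; generalize (3 ^ k) (sumn [seq gates c | c <- l]) => a g; nia.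
Qed.

Lemma sum_cost (F : formula n) :
  \sum_s cost s F <= 3 ^ k * (2 * gates F + (literal F != None)).
Proof.
elim/formula_nested_ind: F => [i|G IH|l IH|l IH] /=.
- apply: (@leq_trans (\sum_(s : restriction) 1)); first by apply: leq_sum => s _; apply: leq_b1.
  by rewrite sum1_card card_restriction muln1.
- by case: (literal G) IH.
- by rewrite addn0; apply: sum_cost_gate.
- by rewrite addn0; apply: sum_cost_gate.
Qed.

Definition free_pairs s := #|[set p : 'I_k | s p == None]|.

Lemma card_free_at (p : 'I_k) : (\sum_(s : restriction) (s p == None)) * 3 = 3 ^ k.
Proof.
have -> : \sum_(s : restriction) (s p == None) =
    #|family (fun i : 'I_k => if i == p then pred1 (@None bool) else predT)|.
  rewrite -sum1_card [RHS]big_mkcond /=; apply: eq_bigr => s _.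
  case: ifP => [/familyP /(_ p)|/negbT/negP fam]; first by rewrite eqxx unfold_in /= => ->.
  case: eqP => // sp; exfalso; apply: fam; apply/familyP => i.
  by case: eqP => [->|]; rewrite unfold_in //= sp.
rewrite card_family_prod (bigD1 p) //= eqxx card1 mul1n.
rewrite (eq_bigr (fun _ => 3)) => [|i /negbTE ->]; last by rewrite card_option card_bool.
rewrite prod_nat_const cardC1 card_ord.
by case: k p => [[]//|m] p; rewrite expnS mulnC.
Qed.

Lemma sum_free_pairs : (\sum_(s : restriction) free_pairs s) * 3 = k * 3 ^ k.
Proof.
have -> : \sum_(s : restriction) free_pairs s =
          \sum_(p : 'I_k) \sum_(s : restriction) (s p == None).
  rewrite exchange_big /=; apply: eq_bigr => s _.
  rewrite /free_pairs -sum1_card [LHS]big_mkcond /=; apply: eq_bigr => p _.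
  by rewrite inE; case: eqP.
rewrite big_distrl /= -[X in _ = X * _]card_ord -sum_nat_const.
by apply: eq_bigr => p _; apply: card_free_at.
Qed.

Lemma sum_sqr_free_pairs : k ^ 2 * 3 ^ k <= 9 * \sum_(s : restriction) free_pairs s ^ 2.
Proof.
have pointwise s : 6 * k * free_pairs s <= 9 * free_pairs s ^ 2 + k ^ 2.
  by have := four_mul_le_sqr_add (3 * free_pairs s) k; nia.
have : \sum_(s : restriction) 6 * k * free_pairs s <=
        \sum_(s : restriction) (9 * free_pairs s ^ 2 + k ^ 2).
  by apply: leq_sum => s _; apply: pointwise.
rewrite big_split /= sum_nat_const card_restriction -!big_distrr /=.
have := sum_free_pairs.
set S1 := \sum_(s : restriction) free_pairs s; set S2 := \sum_(s : restriction) free_pairs s ^ 2.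
rewrite !expnS expn0 muln1; generalize (3 ^ k) => d; nia.
Qed.
End Averaging.

Section LowerBounds.
Variable n : nat.
Local Notation k := (n./2).
Local Notation X := {ffun 'I_n -> bool}.
Local Notation restriction := (restriction n).
Local Notation pair_var := (@pair_var n).
Implicit Types (s : restriction) (x y : X) (v : 'I_n) (F : formula n).

Definition free_vars s := [set v | free s v].
Definition forced_ones s := [set v | forced s v == Some true].

Lemma card_free_vars s : #|free_vars s| = 2 * free_pairs s.
Proof.
have -> : free_vars s = pair_var @: setX [set p | s p == None] setT.
  apply/setP => v; rewrite inE /free; apply/eqP/imsetP => [fv|[pe]].
    have h := free_paired (introT eqP fv); exists (Ordinal h, odd v); last exact: pair_varE.
    by rewrite !inE andbT; move: fv; rewrite (forced_paired s h); case: (s _).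
  by rewrite !inE andbT => /eqP sp ->; rewrite forced_pair_var sp.
by rewrite (card_imset _ (@pair_var_inj n)) cardsX cardsT card_bool mulnC.
Qed.

Lemma card_forced_ones s : #|forced_ones s| + free_pairs s = k.
Proof.
have -> : forced_ones s = (fun p => pair_var (p, s p == Some false)) @: [set p | s p != None].
  apply/setP => v; rewrite inE; apply/eqP/imsetP => [fv|[p]].
    have h : v./2 < k.
      by case: (leqP k (v./2)) => // h; move: fv; rewrite forced_unpaired // -leqNgt.
    exists (Ordinal h); first by rewrite inE; move: fv; rewrite (forced_paired s h); case: (s _).
    rewrite {1}(pair_varE h); congr pair_var; congr pair.
    by move: fv; rewrite (forced_paired s h); case: (s _) => [[]|] //=; case: (odd v).
  by rewrite inE => sp ->; rewrite forced_pair_var /=; case: (s p) sp => [[]|].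
rewrite card_in_imset; last first.
  move=> p q _ _ /(congr1 (fun v : 'I_n => (val v)./2)) /=.
  by rewrite !half_bit_double => /val_inj.
rewrite /free_pairs -[RHS](card_ord k) -(cardsC [set p | s p != None]); congr addn.
by apply: eq_card => p; rewrite !inE negbK.
Qed.

Lemma ones_consistent s x : consistent s x ->
  ones x = #|forced_ones s| + count_ones (free s) x.
Proof.
move=> cx; rewrite ones_count /count_ones addnC.
rewrite -(cardsID (free_vars s) [set w | predT w && x w]).
congr addn; first by apply: eq_card => w; rewrite !inE andbC.
apply: eq_card => w; rewrite !inE /free.
by case E: (forced s w) => [t|] //=; rewrite (consistentP cx E); case: (t).
Qed.

Definition level s j := [set x | consistent s x && (count_ones (free s) x == j)].

Lemma level_nbrs_down s j x : x \in level s j.+1 -> j.+1 <= nbrs (level s j) x.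
Proof.
rewrite inE => /andP[cx /eqP cj].
rewrite -{1}cj; apply: card_le_nbrs => v; rewrite inE => /andP[fv xv].
rewrite inE consistent_flip //=.
by have := count_ones_flip x fv; rewrite xv cj addn1 addn0 => -[->].
Qed.

Lemma level_nbrs_up s j y : y \in level s j -> #|free_vars s| - j <= nbrs (level s j.+1) y.
Proof.
rewrite inE => /andP[cy /eqP cj].
have ones_j : #|free_vars s :&: [set v | y v]| = j.
  by rewrite -cj; apply: eq_card => v; rewrite !inE.
have -> : #|free_vars s| - j = #|[set v | free s v && ~~ y v]|.
  rewrite -(cardsID [set v | y v] (free_vars s)) ones_j addKn.
  by apply: eq_card => v; rewrite !inE andbC.
apply: card_le_nbrs => v; rewrite inE => /andP[fv yv].
rewrite inE consistent_flip //=.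
by have := count_ones_flip y fv; rewrite (negbTE yv) cj addn1 addn0 => ->.
Qed.

Definition base s : X := [ffun v => if forced s v is Some t then t else false].

Lemma level_nonempty s j : j <= #|free_vars s| -> 0 < #|level s j|.
Proof.
elim: j => [|j IH] le_j; apply/card_gt0P.
  exists (base s); rewrite inE; apply/andP; split.
    by apply/forallP => v; rewrite ffunE; case: forced.
  by rewrite cards_eq0; apply/eqP/setP => v; rewrite !inE ffunE /free; case: forced.
have /card_gt0P[x] := IH (ltnW le_j); rewrite inE => /andP[cx /eqP cj].
have [v fv xv] : exists2 v, free s v & ~~ x v.
  apply/exists_inP; apply: contraTT le_j => /exists_inPn all_one; rewrite -ltnNge ltnS -cj.
  apply: subset_leq_card; apply/subsetP => w; rewrite !inE => fw.
  by rewrite fw; apply/negPn/all_one.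
exists (flip x v); rewrite inE consistent_flip //=.
by have := count_ones_flip x fv; rewrite (negbTE xv) cj addn0 addn1 => ->.
Qed.

(* A formula whose value (up to the constant b) separates the levels f+1 and
   f, where f is the number of free pairs, has restricted measure at least
   f^2: each input of these levels has at least f neighbours in the other. *)
Lemma separating_levels_lower_bound s F (b : bool) :
  (forall x, x \in level s (free_pairs s).+1 -> b (+) eval_formula x F) ->
  (forall y, y \in level s (free_pairs s) -> ~~ (b (+) eval_formula y F)) ->
  free_pairs s ^ 2 <= cost s F.
Proof.
move=> hA hB; set f := free_pairs s.
have [f0|fpos] := posnP f; first by rewrite f0.
have hFV := card_free_vars s; rewrite -/f in hFV.
set A := level s f.+1; set B := level s f.
have degA : forall x, x \in A -> f <= nbrs B x.
  by move=> x /level_nbrs_down; apply: leq_trans.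
have degB : forall y, y \in B -> f <= nbrs A y.
  by move=> y /level_nbrs_up; apply: leq_trans; rewrite hFV; lia.
have nonempty : 0 < #|A| * #|B|.
  by rewrite muln_gt0 !level_nonempty // hFV; lia.
have khr : edges A B ^ 2 <= cost s F * #|A| * #|B|.
  apply: (cost_bounds_xor (b := b) (A := A) (B := B) (cost_bounds_all s F)) => [x xA|y yB].
    by move: (xA); rewrite inE => /andP[-> _]; apply: hA.
  by move: (yB); rewrite inE => /andP[-> _]; apply: hB.
have := leq_trans (edges_min_degree degA degB) khr.
by rewrite -[cost s F * _ * _]mulnA leq_pmul2r // expnS expn1.
Qed.

Lemma parity_lower_bound s F : computes F (@parity n) -> free_pairs s ^ 2 <= cost s F.
Proof.
move=> hF; apply: (separating_levels_lower_bound (b := odd (#|forced_ones s| + free_pairs s))).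
  move=> x; rewrite inE hF => /andP[cx /eqP cj].
  by rewrite /parity (ones_consistent cx) cj addnS /= addbN addbb.
move=> y; rewrite inE hF => /andP[cy /eqP cj].
by rewrite /parity (ones_consistent cy) cj addbb.
Qed.

(* MAJORITY is 1 on level f+1 and 0 on level f, since every fixed pair
   contributes exactly one 1 and n = 2k + (n odd). *)
Lemma majority_lower_bound s F : computes F (@majority n) -> free_pairs s ^ 2 <= cost s F.
Proof.
move=> hF; have hk := card_forced_ones s; have hn := odd_double_half n.
apply: (separating_levels_lower_bound (b := false)) => [x|y]; rewrite inE hF /majority.
  move=> /andP[cx /eqP cj]; rewrite (ones_consistent cx) cj.
  by move: hk hn; case: (odd n) => /=; lia.
move=> /andP[cy /eqP cj]; rewrite (ones_consistent cy) cj.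
by move: hk hn; case: (odd n) => /=; lia.
Qed.
End LowerBounds.

Lemma half_sqr_le_gates n (F : formula n) :
  (forall s : restriction n, free_pairs s ^ 2 <= cost s F) ->
  (n./2) ^ 2 <= 9 * (2 * gates F + (literal F != None)).
Proof.
move=> lb.
have sum_lb : \sum_(s : restriction n) free_pairs s ^ 2 <= \sum_(s : restriction n) cost s F.
  by apply: leq_sum => s _; apply: lb.
have := leq_trans (@sum_sqr_free_pairs n) (leq_mul (leqnn 9) (leq_trans sum_lb (sum_cost F))).
by rewrite mulnCA [X in X <= _]mulnC leq_pmul2l ?expn_gt0.
Qed.

(* For n >= 8 the bound becomes n^2 <= 162 gates; the literal case is
   impossible since then (n/2)^2 <= 9. *)
Lemma sqr_le_gates n (F : formula n) : 8 <= n ->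
  (forall s : restriction n, free_pairs s ^ 2 <= cost s F) -> n ^ 2 <= 162 * gates F.
Proof.
move=> n8 /half_sqr_le_gates; have hn := odd_double_half n.
case E: (literal F) => [p|] /=; rewrite ?(literal_gates E) !expnS expn0 !muln1.
  have : 4 <= n./2 by move: hn; case: (odd n) => /=; lia.
  by move=> h4 h; have := leq_mul h4 h4; lia.
have : n <= 3 * n./2 by move: hn; case: (odd n) => /=; lia.
by move=> h3 h; have := leq_mul h3 h3; nia.
Qed.

Theorem mainTheorem14 :
  exists c n0 : nat, 0 < c /\
    forall n : nat, n0 <= n ->
      (forall F : formula n, computes F (@parity n) -> n ^ 2 <= c * gates F) /\
      (forall F : formula n, computes F (@majority n) -> n ^ 2 <= c * gates F).
Proof.
exists 162, 8; split => // n n8; split => F hF; apply: sqr_le_gates => // s.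
  exact: parity_lower_bound.
exact: majority_lower_bound.
Qed.
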